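(* Let $R=(r_{ij})$ be a real symmetric $n\times n$ matrix with zero diagonal and $\rho(|R|)<1$, and let $R'$ be the backtrackless adjacency matrix (defined in the context). Then $\rho(|R'|)\le\rho(|R|)$.
   Context: $|M|$ denotes the entrywise absolute value of a matrix $M$, and $\rho$ the spectral radius. $G$ is the graph on $V=\{1,\dots,n\}$ with undirected edge $\{i,j\}$ whenever $r_{ij}\neq0$; $\partial i$ is the neighbour set of $i$; each undirected edge gives directed edges $(ij)$ and $(ji)$. GaBP messages: for each directed edge $(ij)$, $\alpha_{ij}=\lim_t\alpha^{(t)}_{ij}$ with $\alpha^{(0)}_{ij}=0$, $\alpha^{(t+1)}_{ij}=r_{ij}^2(1-\sum_{k\in\partial i\setminus j}\alpha^{(t)}_{ki})^{-1}$ (convergent when $\rho(|R|)<1$, with $1-\alpha_{i\setminus j}>0$); $\alpha_{i\setminus j}=\sum_{k\in\partial i\setminus j}\alpha_{ki}$; $r'_{ij}=\frac{r_{ij}}{1-\alpha_{i\setminus j}}$. The backtrackless adjacency matrix $R'$ has rows and columns indexed by the directed edges of $G$ (so it is $2|E|\times2|E|$, $|E|$ the number of edges), with $R'_{(ij),(kl)}=r'_{kl}$ if $j=k$ and $i\neq l$, and $R'_{(ij),(kl)}=0$ otherwise. *)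

From HB Require Import structures.
From mathcomp Require Import all_boot all_order all_algebra.
From mathcomp Require Import all_classical all_reals all_analysis.
From mathcomp Require Import complex.
Set Implicit Arguments. Unset Strict Implicit. Unset Printing Implicit Defensive.
Import Order.TTheory GRing.Theory Num.Theory numFieldNormedType.Exports.
Local Open Scope ring_scope.
Local Open Scope classical_set_scope.

Definition absmx (R : realType) m n (M : 'M[R]_(m, n)) : 'M[R]_(m, n) :=
  map_mx (fun x => `|x|) M.

(* spectral radius: the largest modulus of a (complex) eigenvalue, i.e. of a
   root in R[i] of the characteristic polynomial (sup of the empty set is 0 for n = 0) *)
Definition spectral_radius (R : realType) n (A : 'M[R]_n) : R :=
  sup [set Normc.normc l | l in [set l : R[i] |
        root (char_poly (map_mx (fun x : R => (x%:C)%C) A)) l]].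

(* GaBP message iterates alpha^(t)_{ij} (defined for all pairs; nonzero only on
   directed edges).  Neighbour k of i: r_{ik} != 0. *)
Fixpoint gabp_iter (R : realType) n (M : 'M[R]_n) (t : nat) : 'I_n -> 'I_n -> R :=
  match t with
  | 0 => fun _ _ => 0
  | t'.+1 => fun i j =>
      M i j ^+ 2 *
      (1 - \sum_(k < n | (M i k != 0) && (k != j)) gabp_iter M t' k i)^-1
  end.

Definition gabp_alpha (R : realType) n (M : 'M[R]_n) (i j : 'I_n) : R :=
  limn (fun t => gabp_iter M t i j).

Definition gabp_alpha_excl (R : realType) n (M : 'M[R]_n) (i j : 'I_n) : R :=
  \sum_(k < n | (M i k != 0) && (k != j)) gabp_alpha M k i.

Definition rprime (R : realType) n (M : 'M[R]_n) (i j : 'I_n) : R :=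
  M i j / (1 - gabp_alpha_excl M i j).

Definition dedge (R : realType) n (M : 'M[R]_n) :=
  {e : 'I_n * 'I_n | M e.1 e.2 != 0}.

Definition backtrackless (R : realType) n (M : 'M[R]_n) :
  'M[R]_#|{: dedge M}| :=
  \matrix_(a, b)
    let: (i, j) := val (enum_val a : dedge M) in
    let: (k, l) := val (enum_val b : dedge M) in
    if (j == k) && (i != l) then rprime M k l else 0.

From HB Require Import structures.
From mathcomp Require Import all_boot all_order all_algebra.
From mathcomp Require Import all_classical all_reals all_analysis.
From mathcomp Require Import complex polyrcf.
From mathcomp Require Import ring lra.
Import Order.TTheory GRing.Theory Num.Theory numFieldNormedType.Exports.
Local Open Scope ring_scope.
Set Implicit Arguments. Unset Strict Implicit. Unset Printing Implicit Defensive.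

(* If [|R| x <= lam x] for a positive vector [x] and [lam < 1] (such an [x] exists for every
   [lam > rho(|R|)], obtained from [adj(t - |R|) 1] by decreasing [t] from infinity), then
   [alpha^(t)_ij x_j <= |r_ij| x_i] is preserved by the GaBP iteration, which is also monotone;
   so the messages converge and [(1 - alpha_{i\j}) x_i >= (1 - lam) x_i + |r_ij| x_j].  Hence
   the edge weights [w_ij = |r_ij| (x_i - |r'_ij| x_j)] are positive, and since the fixed-point
   equation gives [sum_{i <> l} |r_ik| |r'_ik| = alpha_{k\l}], they satisfy
   [w^T |R'| <= lam w^T].  A positive subinvariant vector bounds the spectral radius of a
   nonnegative matrix, so [rho(|R'|) <= lam] for every [lam] in [(rho(|R|), 1)]. *)

Lemma char_poly_tr (F : fieldType) m (A : 'M[F]_m) : char_poly A^T = char_poly A.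
Proof.
rewrite /char_poly -det_tr; congr (\det _).
by apply/matrixP => i j; rewrite !mxE; case: eqP => [->|]; case: eqP => // ->.
Qed.

Lemma normc_real (R : rcfType) (t : R) : Normc.normc (t%:C)%C = `|t|.
Proof. by rewrite /Normc.normc /= expr0n /= addr0 sqrtr_sqr. Qed.

Definition complex_char_poly (R : rcfType) m (A : 'M[R]_m) : {poly R[i]} :=
  char_poly (map_mx (fun x : R => (x%:C)%C) A).

Lemma sup_le_ub (R : realType) (E : set R) x : 0 <= x -> ubound E x -> sup E <= x.
Proof.
move=> x_ge0 Ex; have [E_neq0|E_eq0] := pselect (E !=set0)%classic; first exact: ge_sup.
by rewrite sup_out // => -[].
Qed.

Section NonnegativeSpectralRadius.
Variables (R : realType) (m : nat) (C : 'M[R]_m).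
Hypothesis C_ge0 : forall a b, 0 <= C a b.

(* For [C u = l u], the triangle inequality gives [|l| |u| <= C |u|] entrywise; pairing with [v]
   yields [|l| <v, |u|> <= lam <v, |u|>]. *)
Lemma normc_root_le_subinvariant (v : 'I_m -> R) (lam : R) :
  (forall a, 0 < v a) -> (forall b, \sum_a v a * C a b <= lam * v b) ->
  forall l, root (complex_char_poly C) l -> Normc.normc l <= lam.
Proof.
move=> v_gt0 v_sub l rootl.
have /eigenvalueP [u ul u0] : eigenvalue (map_mx (fun x : R => (x%:C)%C) C)^T l.
  by rewrite eigenvalue_root_char char_poly_tr.
have tri b : `|l| * `|u 0 b| <= \sum_a `|u 0 a| * (C b a)%:C%C.
  move/matrixP: ul => /(_ 0 b); rewrite !mxE => ulb; rewrite -normrM -ulb.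
  apply: le_trans (ler_norm_sum _ _ _) _; apply: ler_sum => a _.
  by rewrite !mxE normrM [`|(C b a)%:C%C|]ger0_norm ?ler0c.
set K := \sum_b (v b)%:C%C * `|u 0 b|.
have K_gt0 : 0 < K.
  have [a ua] : exists a, u 0 a != 0.
    apply/existsP; apply: contraNT u0 => /existsPn u_eq0.
    by apply/eqP/rowP => a; rewrite mxE; apply/eqP; have := u_eq0 a; rewrite negbK.
  rewrite /K (bigD1 a) //=; apply: ltr_pwDl.
    by rewrite mulr_gt0 ?normr_gt0 // ltcR v_gt0.
  by apply: sumr_ge0 => b _; rewrite mulr_ge0 // ler0c ltW.
suff : `|l| * K <= lam%:C%C * K by rewrite ler_pM2r // -lecR.
rewrite /K !mulr_sumr.
apply: (@le_trans _ _ (\sum_b (v b)%:C%C * \sum_a `|u 0 a| * (C b a)%:C%C)).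
  apply: ler_sum => b _; rewrite mulrCA; apply: ler_wpM2l; last exact: tri.
  by rewrite ler0c ltW.
under eq_bigr do rewrite mulr_sumr.
rewrite exchange_big /=; apply: ler_sum => a _.
under eq_bigr do rewrite mulrCA.
rewrite -mulr_sumr [X in _ <= X]mulrA [X in _ <= X]mulrC; apply: ler_wpM2l => //.
under eq_bigr do rewrite -rmorphM /=.
rewrite -(rmorph_sum (real_complex R)) -rmorphM lecR.
exact: le_trans (v_sub a) (lexx _).
Qed.

Lemma spectral_radius_le_subinvariant (v : 'I_m -> R) (lam : R) :
  (forall a, 0 < v a) -> 0 <= lam -> (forall b, \sum_a v a * C a b <= lam * v b) ->
  spectral_radius C <= lam.
Proof.
move=> v_gt0 lam_ge0 v_sub; apply: sup_le_ub => // _ [l rootl <-].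
exact: normc_root_le_subinvariant v_sub l rootl.
Qed.

Lemma normc_root_le_spectral_radius l :
  root (complex_char_poly C) l -> Normc.normc l <= spectral_radius C.
Proof.
move=> rootl; apply: ub_le_sup; last by exists l.
exists (\sum_a \sum_b C a b) => _ [l' rootl' <-].
apply: (@normc_root_le_subinvariant (fun _ => 1)) rootl' => // b.
rewrite mulr1; apply: ler_sum => a _; rewrite mul1r (bigD1 b) //= lerDl.
exact: sumr_ge0.
Qed.

Lemma spectral_radius_ge0 : 0 <= spectral_radius C.
Proof.
rewrite /spectral_radius; set S := (X in sup X).
have [[_ [l rootl _]]|S_eq0] := pselect (S !=set0)%classic; last by rewrite sup_out // => -[].
apply: le_trans (normc_root_le_spectral_radius rootl).
by case: l {rootl} => a b; apply: sqrtr_ge0.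
Qed.

End NonnegativeSpectralRadius.

Lemma horner_char_poly_mx_mul (R : comNzRingType) m (A : 'M[R]_m)
    (W : 'cV[{poly R}]_m) t i :
  ((char_poly_mx A *m W) i 0).[t] = t * (W i 0).[t] - \sum_j A i j * (W j 0).[t].
Proof.
rewrite mxE horner_sum.
under eq_bigr do rewrite !mxE hornerM hornerD hornerN hornerMn hornerX hornerC mulrBl.
rewrite sumrB (bigD1 i) //= eqxx mulr1n big1 ?addr0 //.
by move=> j /negPf; rewrite eq_sym => ->; rewrite mulr0n mul0r.
Qed.

Section PerronSubinvariant.
Variables (R : realType) (m : nat) (A : 'M[R]_m) (t0 : R).
Hypotheses (A_ge0 : forall i j, 0 <= A i j) (rho_lt : spectral_radius A < t0).

Lemma char_poly_neq0_above t : t0 <= t -> (char_poly A).[t] != 0.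
Proof.
move=> t0t; apply/negP => /eqP pt.
have rootC : root (complex_char_poly A) t%:C%C.
  by rewrite /complex_char_poly -map_char_poly; apply: rmorph_root; apply/rootP.
have := normc_root_le_spectral_radius A_ge0 rootC; rewrite normc_real.
by move/(le_trans (ler_norm t)); apply/negP; rewrite -ltNge (lt_le_trans rho_lt).
Qed.

(* [char_poly A] is monic, so positive at infinity, and it has no root beyond [t0]. *)
Lemma char_poly_gt0_above t : t0 <= t -> 0 < (char_poly A).[t].
Proof.
move=> t0t; set p := char_poly A.
have lead_gt0 : 0 < lead_coef p by rewrite (eqP (char_poly_monic A)) ltr01.
have [N pN] := poly_pinfty_gt_lc lead_gt0.
have pmax : 0 < p.[Num.max N t] by apply: lt_le_trans lead_gt0 (pN _ _); rewrite le_max lexx.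
rewrite lt_neqAle eq_sym char_poly_neq0_above //= leNgt; apply/negP => pt_lt0.
have t_le : t <= Num.max N t by rewrite le_max lexx orbT.
have sign_change : p.[t] * p.[Num.max N t] < 0 by rewrite pmulr_llt0.
have [x /andP [tx _] rootx] := poly_ivtoo t_le sign_change.
by move: (char_poly_neq0_above (le_trans t0t (ltW tx))); rewrite -rootE rootx.
Qed.

(* [char_poly_mx A] is [X - A], so [w t] is the vector [adj(t - A) 1]. *)
Let W := \adj (char_poly_mx A) *m const_mx 1 : 'cV[{poly R}]_m.
Let w t i := (W i 0).[t].

Lemma adj_vec_eq t i : t * w t i - \sum_j A i j * w t j = (char_poly A).[t].
Proof.
have : ((char_poly_mx A *m W) i 0).[t] = (((char_poly A)%:M *m const_mx 1 : 'cV_m) i 0).[t].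
  by rewrite /W mulmxA mul_mx_adj.
by rewrite horner_char_poly_mx_mul => ->; rewrite mul_scalar_mx !mxE mulr1.
Qed.

Lemma adj_vec_gt0_of_ge0 t : t0 <= t -> (forall j, 0 <= w t j) -> forall j, 0 < w t j.
Proof.
move=> t0t w_ge0 j; rewrite lt_neqAle w_ge0 andbT; apply/eqP => wj0.
have := adj_vec_eq t j; rewrite -wj0 mulr0 sub0r => sum_eq.
have := char_poly_gt0_above t0t; rewrite -sum_eq oppr_gt0 ltNge => /negP; apply.
by apply: sumr_ge0 => k _; apply: mulr_ge0.
Qed.

(* At a minimal coordinate [j0], [(t - row sum) w_j0 >= t w_j0 - (A w)_j0 > 0]. *)
Lemma adj_vec_gt0_large t : t0 <= t -> (forall i, \sum_j A i j < t) -> forall i, 0 < w t i.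
Proof.
move=> t0t rowsum_lt i.
have [j0 _ j0_min] := arg_minP (fun j => w t j) (isT : predT i).
apply: lt_le_trans (j0_min i isT); rewrite ltNge; apply/negP => wj0_le0.
have h : (\sum_j A j0 j) * w t j0 <= \sum_j A j0 j * w t j.
  by rewrite mulr_suml; apply: ler_sum => j _; apply: ler_wpM2l => //; exact: j0_min.
have := adj_vec_eq t j0; have := char_poly_gt0_above t0t; have := rowsum_lt j0.
move: h wj0_le0; set S := \sum_j A j0 j; set Sw := \sum_j A j0 j * w t j.
nra.
Qed.

Let P := \prod_i W i 0.

Lemma adj_vec_gt0_rootfree y T : (forall i, 0 < w T i) -> t0 <= y -> y < T ->
  {in `]y, T[, forall z, ~~ root P z} -> forall j, 0 < w y j.
Proof.
move=> wT_gt0 t0y yT rootfree; apply: adj_vec_gt0_of_ge0 => // j.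
rewrite leNgt; apply/negP => wyj_lt0.
have sign_change : (W j 0).[y] * (W j 0).[T] < 0 by rewrite pmulr_llt0 ?wT_gt0.
have [z zin rootz] := poly_ivtoo (ltW yT) sign_change.
have := rootfree z zin; rewrite rootE horner_prod (bigD1 j) //=.
by rewrite (rootP rootz) mul0r eqxx.
Qed.

(* Follow [t |-> adj(t - A) 1] down from a large [t], where it is positive, to [t0]: a
   coordinate can only change sign at a root of [P], and at the largest root of [P] in
   [[t0, T]] all coordinates would still be positive. *)
Lemma perron_subinvariant :
  exists2 x : 'I_m -> R, (forall i, 0 < x i) & (forall i, \sum_j A i j * x j <= t0 * x i).
Proof.
pose s := \sum_i \sum_j A i j.
pose T := Num.max t0 (1 + s) + 1.
have [t0_le s_le] : t0 <= Num.max t0 (1 + s) /\ 1 + s <= Num.max t0 (1 + s).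
  by rewrite !le_max !lexx orbT.
have t0T : t0 < T by rewrite /T; lra.
have wT_gt0 : forall i, 0 < w T i.
  apply: adj_vec_gt0_large (ltW t0T) _ => i.
  have : \sum_j A i j <= s.
    by rewrite /s [X in _ <= X](bigD1 i) //= lerDl; apply: sumr_ge0 => k _; apply: sumr_ge0.
  rewrite /T; lra.
have PT : 0 < P.[T] by rewrite horner_prod; apply: prodr_gt0 => i _; exact: wT_gt0.
case: (prev_rootP P t0 T) => [P0 | y _ Py yin rootfree | c _ _ rootfree].
- by rewrite P0 horner0 ltxx in PT.
- move: yin; rewrite in_itv /= => /andP[t0y yT].
  have wy_gt0 := adj_vec_gt0_rootfree wT_gt0 (ltW t0y) yT rootfree.
  have : 0 < P.[y] by rewrite horner_prod; apply: prodr_gt0 => i _; exact: wy_gt0.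
  by rewrite Py ltxx.
- exists (w t0); first exact: adj_vec_gt0_rootfree wT_gt0 (lexx _) t0T rootfree.
  by move=> i; have := adj_vec_eq t0 i; have := char_poly_gt0_above (lexx t0); lra.
Qed.

End PerronSubinvariant.

Lemma sum_dedge (R : realType) n (M : 'M[R]_n) (g : 'I_n * 'I_n -> R) :
  (forall p, M p.1 p.2 = 0 -> g p = 0) ->
  \sum_(a < #|{: dedge M}|) g (val (enum_val a)) = \sum_i \sum_j g (i, j).
Proof.
move=> g0; have -> : \sum_i \sum_j g (i, j) = \sum_p g p.
  by rewrite pair_bigA; apply: eq_bigr => -[i j].
rewrite -(big_enum_val (A := {: dedge M}) (fun e => g (val e))) /=.
rewrite [RHS](bigID (fun p => M p.1 p.2 != 0)) /= [X in _ = _ + X]big1 ?addr0; last first.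
  by move=> p /negPn/eqP; apply: g0.
rewrite (reindex_omap (val : dedge M -> 'I_n * 'I_n) insub); last first.
  by move=> p Mp; rewrite insubT.
by apply: eq_bigl => -[p Mp] /=; rewrite insubT /= Mp eqxx.
Qed.

Lemma backtrackless_vec_mul (R : realType) n (M : 'M[R]_n) (w : 'I_n -> 'I_n -> R) b k l :
  (forall i j, M i j = 0 -> w i j = 0) -> val (enum_val b) = (k, l) ->
  \sum_a w (val (enum_val a)).1 (val (enum_val a)).2 * absmx (backtrackless M) a b =
  `|rprime M k l| * \sum_(i | i != l) w i k.
Proof.
move=> w0 bkl.
pose g (p : 'I_n * 'I_n) := w p.1 p.2 * (if (p.2 == k) && (p.1 != l) then `|rprime M k l| else 0).
transitivity (\sum_(a < #|{: dedge M}|) g (val (enum_val a))).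
  apply: eq_bigr => a _; rewrite /absmx /backtrackless !mxE bkl /g.
  by case: (val (enum_val a)) => i j /=; case: ifP; rewrite ?normr0.
rewrite sum_dedge; last by move=> p /w0 wp; rewrite /g wp mul0r.
rewrite mulr_sumr [RHS]big_mkcond /=; apply: eq_bigr => i _.
rewrite (bigD1 k) //= big1 ?addr0; last by move=> j /negPf jk; rewrite /g /= jk mulr0.
by rewrite /g /= eqxx /=; case: (i != l); rewrite ?mulr0 // mulrC.
Qed.

Lemma backtrack_step_ineq (F : realFieldType) (lam c a X Y S : F) :
  lam <= 1 -> 0 <= c -> 0 <= a <= 1 -> 0 <= X -> 0 <= Y ->
  S <= lam * X - c * (1 - a) * Y -> c * (S - X * a) <= lam * (c * (1 - a) * (X - c * Y)).
Proof.
move=> lam_le1 c_ge0 /andP[a_ge0 a_le1] X_ge0 Y_ge0 S_le; rewrite -subr_ge0.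
have -> : lam * (c * (1 - a) * (X - c * Y)) - c * (S - X * a) =
    c * (lam * X - c * (1 - a) * Y - S) + (1 - lam) * (c * X * a + c * c * (1 - a) * Y) by ring.
have cX : 0 <= c * X := mulr_ge0 c_ge0 X_ge0.
have cca : 0 <= c * c * (1 - a) by rewrite !mulr_ge0 ?subr_ge0.
by apply: addr_ge0; apply: mulr_ge0; try lra; apply: addr_ge0; apply: mulr_ge0; lra.
Qed.

Definition excl_sum (R : realType) n (M : 'M[R]_n) (b : 'I_n -> 'I_n -> R) (i j : 'I_n) :=
  \sum_(k < n | (M i k != 0) && (k != j)) b k i.

Section GaBPMessages.
Variables (R : realType) (n : nat) (M : 'M[R]_n) (x : 'I_n -> R) (lam : R).
Hypotheses (M_sym : forall i j, M i j = M j i) (x_gt0 : forall i, 0 < x i).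
Hypotheses (lam_lt1 : lam < 1) (Mx_le : forall i, \sum_j `|M i j| * x j <= lam * x i).

Definition msg_bounded (b : 'I_n -> 'I_n -> R) :=
  forall i j, 0 <= b i j /\ b i j * x j <= `|M i j| * x i.

Lemma excl_sum_bound b : msg_bounded b ->
  forall i j, (1 - lam) * x i + `|M i j| * x j <= (1 - excl_sum M b i j) * x i.
Proof.
move=> b_bd i j.
have excl_le : excl_sum M b i j * x i <= \sum_(k | k != j) `|M i k| * x k.
  rewrite /excl_sum mulr_suml big_mkcond [X in _ <= X]big_mkcond /=.
  apply: ler_sum => k _; case: (k != j); rewrite ?andbT ?andbF //=.
  case: (M i k != 0) => /=; last by rewrite mulr_ge0 // ltW.
  by rewrite M_sym; case: (b_bd k i).
have := Mx_le i; rewrite (bigD1 j) //=; lra.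
Qed.

Lemma one_sub_excl_sum_gt0 b : msg_bounded b -> forall i j, 0 < 1 - excl_sum M b i j.
Proof.
move=> b_bd i j; have := excl_sum_bound b_bd i j.
have : 0 < (1 - lam) * x i by rewrite mulr_gt0 ?subr_gt0.
have : 0 <= `|M i j| * x j by rewrite mulr_ge0 // ltW.
by move=> ? ? ?; rewrite -(pmulr_lgt0 _ (x_gt0 i)); lra.
Qed.

Lemma gabp_iterS t i j :
  gabp_iter M t.+1 i j = M i j ^+ 2 / (1 - excl_sum M (gabp_iter M t) i j).
Proof. by []. Qed.

Lemma gabp_iter_bounded t : msg_bounded (gabp_iter M t).
Proof.
elim: t => [|t IH] i j; first by split; rewrite //= mul0r mulr_ge0 // ltW.
have D_gt0 := one_sub_excl_sum_gt0 IH i j; have := excl_sum_bound IH i j.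
rewrite gabp_iterS => excl_bd.
split; first by rewrite divr_ge0 ?sqr_ge0 ?ltW.
rewrite mulrAC ler_pdivrMr // -real_normK ?num_real // expr2 -!mulrA ler_wpM2l //.
have : 0 < (1 - lam) * x i by rewrite mulr_gt0 ?subr_gt0.
lra.
Qed.

Lemma gabp_iter_nondecreasing t i j : gabp_iter M t i j <= gabp_iter M t.+1 i j.
Proof.
elim: t i j => [|t IH] i j; first by case: (gabp_iter_bounded 1 i j).
rewrite !gabp_iterS ler_wpM2l ?sqr_ge0 // lef_pV2 ?posrE ?one_sub_excl_sum_gt0 //;
  try exact: gabp_iter_bounded.
by rewrite lerD2l lerN2; apply: ler_sum => k _; exact: IH.
Qed.

Lemma gabp_iter_cvg i j : cvgn (fun t => gabp_iter M t i j).
Proof.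
apply: nondecreasing_is_cvgn.
  by apply/nondecreasing_seqP => t; exact: gabp_iter_nondecreasing.
exists (`|M i j| * x i / x j) => _ [t _ <-].
by rewrite ler_pdivlMr //; case: (gabp_iter_bounded t i j).
Qed.

Lemma gabp_alpha_bounded : msg_bounded (gabp_alpha M).
Proof.
move=> i j; split.
  apply: limr_ge; first exact: gabp_iter_cvg.
  by apply: nearW => t; case: (gabp_iter_bounded t i j).
rewrite -ler_pdivlMr //; apply: limr_le; first exact: gabp_iter_cvg.
by apply: nearW => t; rewrite ler_pdivlMr //; case: (gabp_iter_bounded t i j).
Qed.

(* Pass to the limit in [alpha^(t+1)_ij (1 - alpha^(t)_{i\j}) = r_ij^2]. *)
Lemma gabp_alpha_fixpoint i j : gabp_alpha M i j * (1 - gabp_alpha_excl M i j) = M i j ^+ 2.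
Proof.
have cvg_next : ((fun t => gabp_iter M t.+1 i j) @ \oo --> gabp_alpha M i j)%classic.
  by rewrite (cvg_shiftS (fun t => gabp_iter M t i j)); exact: gabp_iter_cvg.
have cvg_excl :
    ((fun t => excl_sum M (gabp_iter M t) i j) @ \oo --> gabp_alpha_excl M i j)%classic.
  by apply: cvg_big => //; [exact: add_continuous | move=> k _; exact: gabp_iter_cvg].
pose f t := gabp_iter M t.+1 i j * (1 - excl_sum M (gabp_iter M t) i j).
have cvg_f : (f @ \oo --> gabp_alpha M i j * (1 - gabp_alpha_excl M i j))%classic.
  by rewrite /f; apply: cvgM => //; apply: cvgB => //; exact: cvg_cst.
have f_cst : f = fun=> M i j ^+ 2.
  apply: funext => t; rewrite /f gabp_iterS mulfVK // gt_eqF //.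
  exact/one_sub_excl_sum_gt0/gabp_iter_bounded.
by move: cvg_f; rewrite f_cst => /(cvg_lim (@Rhausdorff R)); rewrite lim_cst.
Qed.

Lemma gabp_alpha_excl_bound i j :
  (1 - lam) * x i + `|M i j| * x j <= (1 - gabp_alpha_excl M i j) * x i.
Proof. exact/excl_sum_bound/gabp_alpha_bounded. Qed.

Lemma one_sub_gabp_alpha_excl_gt0 i j : 0 < 1 - gabp_alpha_excl M i j.
Proof. exact/one_sub_excl_sum_gt0/gabp_alpha_bounded. Qed.

Lemma gabp_alpha_eq i j : gabp_alpha M i j = `|M i j| ^+ 2 / (1 - gabp_alpha_excl M i j).
Proof.
have D_gt0 := one_sub_gabp_alpha_excl_gt0 i j.
by rewrite real_normK ?num_real // -gabp_alpha_fixpoint mulfK // gt_eqF.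
Qed.

Lemma norm_rprime i j : `|rprime M i j| = `|M i j| / (1 - gabp_alpha_excl M i j).
Proof.
have D_gt0 := one_sub_gabp_alpha_excl_gt0 i j.
by rewrite /rprime normrM normrV ?unitf_gt0 // [`|1 - _|]gtr0_norm.
Qed.

Lemma sum_gabp_alpha_excl k l : \sum_(i | i != l) gabp_alpha M i k = gabp_alpha_excl M k l.
Proof.
rewrite /gabp_alpha_excl [RHS]big_mkcond [LHS]big_mkcond; apply: eq_bigr => i _ /=.
case: (i != l); rewrite ?andbT ?andbF //=.
case: eqVneq => [Mki0|//] /=.
by rewrite gabp_alpha_eq -M_sym Mki0 normr0 expr0n /= mul0r.
Qed.

Definition edge_weight i j := `|M i j| * (x i - `|rprime M i j| * x j).

Lemma edge_weight_gt0 i j : M i j != 0 -> 0 < edge_weight i j.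
Proof.
move=> Mij; have D_gt0 := one_sub_gabp_alpha_excl_gt0 i j.
rewrite /edge_weight norm_rprime mulr_gt0 ?normr_gt0 // subr_gt0 mulrAC ltr_pdivrMr //.
have := gabp_alpha_excl_bound i j.
have : 0 < (1 - lam) * x i by rewrite mulr_gt0 ?subr_gt0.
lra.
Qed.

Lemma edge_weight_subinvariant k l : M k l != 0 ->
  `|rprime M k l| * \sum_(i | i != l) edge_weight i k <= lam * edge_weight k l.
Proof.
move=> Mkl; have D_gt0 := one_sub_gabp_alpha_excl_gt0 k l.
have sum_w : \sum_(i | i != l) edge_weight i k =
    \sum_(i | i != l) `|M k i| * x i - x k * gabp_alpha_excl M k l.
  rewrite -sum_gabp_alpha_excl mulr_sumr -sumrB; apply: eq_bigr => i _.
  by rewrite /edge_weight gabp_alpha_eq norm_rprime [M i k]M_sym; ring.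
have Mkl_eq : `|M k l| = `|rprime M k l| * (1 - gabp_alpha_excl M k l).
  by rewrite norm_rprime divfK ?gt_eqF.
have excl_ge0 : 0 <= gabp_alpha_excl M k l.
  by apply: sumr_ge0 => i _; case: (gabp_alpha_bounded i k).
have Mx_lek := Mx_le k; rewrite (bigD1 l) //= Mkl_eq in Mx_lek.
rewrite sum_w /edge_weight [in X in _ <= X]Mkl_eq.
apply: backtrack_step_ineq; rewrite ?normr_ge0 ?(ltW (x_gt0 _)) ?(ltW lam_lt1) //.
  by apply/andP; split; lra.
lra.
Qed.

Lemma spectral_radius_backtrackless_le :
  0 <= lam -> spectral_radius (absmx (backtrackless M)) <= lam.
Proof.
move=> lam_ge0.
apply: (@spectral_radius_le_subinvariant _ _ _ _
  (fun a => edge_weight (val (enum_val a)).1 (val (enum_val a)).2)) => //.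
- by move=> a b; rewrite mxE.
- by move=> a; apply: edge_weight_gt0; exact: (valP (enum_val a)).
move=> b; case bkl: (val (enum_val b)) => [k l].
rewrite (backtrackless_vec_mul _ bkl); last first.
  by move=> i j Mij; rewrite /edge_weight Mij normr0 mul0r.
by apply: edge_weight_subinvariant; have := valP (enum_val b); rewrite bkl.
Qed.

End GaBPMessages.

Unset Implicit Arguments.

Theorem lemma5 (R : realType) (n : nat) (M : 'M[R]_n) :
  M^T = M ->
  (forall i, M i i = 0) ->
  spectral_radius (absmx M) < 1 ->
  spectral_radius (absmx (backtrackless M)) <= spectral_radius (absmx M).
Proof.
move=> MT _ rho_lt1.
have M_sym i j : M i j = M j i by rewrite -{1}MT mxE.
have absM_ge0 i j : 0 <= absmx M i j by rewrite mxE.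
have rho_ge0 := spectral_radius_ge0 absM_ge0.
set rho := spectral_radius (absmx M) in rho_lt1 rho_ge0 *.
apply/ler_addgt0Pr => e e_gt0.
pose lam := Num.min (rho + e) ((rho + 1) / 2).
have lam_le : lam <= rho + e /\ lam <= (rho + 1) / 2 by rewrite !ge_min !lexx orbT.
have rho_lt_lam : rho < lam by rewrite lt_min; apply/andP; split; lra.
have [x x_gt0 x_sub] := perron_subinvariant absM_ge0 rho_lt_lam.
have Mx_le i : \sum_j `|M i j| * x j <= lam * x i.
  by rewrite (eq_bigr (fun j => absmx M i j * x j)) ?x_sub // => j _; rewrite mxE.
apply: le_trans (spectral_radius_backtrackless_le M_sym x_gt0 _ Mx_le _) _; lra.
Qed.
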